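(* Let $\{X_1,X_2,\dots\}$ be a random dense countable subset of $(0,1)$. Suppose that on the same probability space there are random variables $Y_1,Y_2,\dots$ with values in $(0,1)$ such that: - $\{Y_1,Y_2,\dots\}=\{X_1,X_2,\dots\}$ a.s.; - $Y_{2k-1}<\tfrac12$ and $Y_{2k}\ge\tfrac12$ a.s. for all $k$; - the sequence $(Y_2,Y_4,\dots)$ is independent of $(Y_1,Y_3,\dots)$. Suppose moreover that $\Pr(X_1<\tfrac12)>0$. Then for almost all $x_1\in(0,\tfrac12)$ with respect to the distribution of $X_1$, the conditional joint distribution of $(Y_2,Y_4,\dots)$ given $X_1=x_1$ is absolutely continuous with respect to the unconditional joint distribution of $(Y_2,Y_4,\dots)$.
   Context: A random dense countable subset of $(0,1)$ is given by random variables $X_1,X_2,\dots:\Omega\to(0,1)$ such that $\{X_1(\omega),X_2(\omega),\dots\}$ is dense in $(0,1)$ for a.e. $\omega$. *)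

From HB Require Import structures.
From mathcomp Require Import all_boot all_order all_algebra.
From mathcomp Require Import all_classical all_reals all_analysis.
Set Implicit Arguments. Unset Strict Implicit. Unset Printing Implicit Defensive.
Import Order.TTheory GRing.Theory Num.Theory.
Local Open Scope classical_set_scope.
Local Open Scope ring_scope.

(* The type of real sequences R^N (an alias of nat -> R, made a pointedType
   so that a sigma-algebra can be put on it). *)
Definition Rseq (R : realType) := (nat -> R)%type.
HB.instance Definition _ (R : realType) := gen_eqMixin (Rseq R).
HB.instance Definition _ (R : realType) := gen_choiceMixin (Rseq R).
HB.instance Definition _ (R : realType) := isPointed.Build (Rseq R) (fun _ => 0).

Definition cylinders (R : realType) : set (set (Rseq R)) :=
  [set C | exists (n : nat) (A : set R),
     measurable A /\ C = (fun f : Rseq R => f n) @^-1` A].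

Definition seqspace (R : realType) := g_sigma_algebraType (@cylinders R).

Definition dense_in_01 (R : realType) (x : nat -> R) : Prop :=
  forall a b : R, 0 <= a -> a < b -> b <= 1 -> exists n, a < x n < b.

Definition indep_seq d (Omega : measurableType d) (R : realType)
    (P : probability Omega R) (U V : Omega -> seqspace R) : Prop :=
  forall A B : set (seqspace R), measurable A -> measurable B ->
    P (U @^-1` A `&` V @^-1` B) = (P (U @^-1` A) * P (V @^-1` B))%E.

(* k is a (regular) conditional distribution of V given the real random
   variable X: a probability kernel such that for all Borel A and all
   measurable B, P(X in A, V in B) = int_A k(x, B) dP_X(x). *)
Definition is_cond_distr d (Omega : measurableType d) (R : realType)
    (P : probability Omega R) (X : {RV P >-> R}) (V : Omega -> seqspace R)
    (k : R.-pker R ~> seqspace R) : Prop :=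
  forall (A : set R) (B : set (seqspace R)), measurable A -> measurable B ->
    P (X @^-1` A `&` V @^-1` B) =
    (\int[distribution P X]_(x in A) k x B)%E.

(* Let lambda be the law of V = (Y_2, Y_4, ...) and nu = sum_n 2^-n law(Y_{2n-1}).
   By independence, (Y_{2n-1}, V) has law law(Y_{2n-1}) x lambda, which is
   dominated by nu x lambda.  Almost surely, if X_1 < 1/2 then X_1 is some
   Y_{2n-1}, because every Y_{2k} is >= 1/2; hence the law of (X_1, V)
   restricted to {X_1 < 1/2} is dominated by nu x lambda, with a density h.
   Let g be the density with respect to nu of the law of X_1 restricted to
   {X_1 < 1/2}.  Fubini and the defining property of the conditional
   distribution k give k(x, B) g(x) = int_B h(x, y) dlambda(y) for nu-almost
   every x, simultaneously for all B in a countable pi-system generating the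
   sigma-algebra of R^N.  Where g(x) > 0, k(x, .) is therefore the measure
   with density h(x, .) / g(x) with respect to lambda, and g > 0 almost
   everywhere for the law of X_1 on {X_1 < 1/2}. *)

From HB Require Import structures.
From mathcomp Require Import all_boot all_order all_algebra.
From mathcomp Require Import all_classical all_reals all_analysis.
From mathcomp Require Import measurable_realfun.
Import Order.TTheory GRing.Theory Num.Theory.
Local Open Scope classical_set_scope.
Local Open Scope ring_scope.
Set Implicit Arguments. Unset Strict Implicit. Unset Printing Implicit Defensive.

Section rational_cylinders.
Variable R : realType.

Definition rat_cylinder (s : seq (nat * rat)) : set (seqspace R) :=
  [set f | all (fun p => f p.1 < ratr p.2) s].

Lemma rat_cylinderI s t :
  rat_cylinder s `&` rat_cylinder t = rat_cylinder (s ++ t).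
Proof. by apply/seteqP; split => f /=; rewrite /rat_cylinder /= all_cat => /andP. Qed.

Lemma rat_cylinder_nil : rat_cylinder [::] = setT.
Proof. by apply/seteqP; split. Qed.

Lemma setI_closed_rat_cylinder : setI_closed (range rat_cylinder).
Proof. by move=> _ _ [s _ <-] [t _ <-]; exists (s ++ t); rewrite ?rat_cylinderI. Qed.

Lemma measurable_rat_cylinder s : measurable (rat_cylinder s).
Proof.
elim: s => [|p s IH]; first by rewrite rat_cylinder_nil.
rewrite -cat1s -rat_cylinderI; apply: measurableI => //.
apply: sub_sigma_algebra; exists p.1, `]-oo, ratr p.2[%classic; split => //.
by apply/seteqP; split => f /=; rewrite /rat_cylinder /= andbT in_itv.
Qed.

Lemma seqspace_measurableE : @measurable _ (seqspace R) = <<s range rat_cylinder >>.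
Proof.
apply/seteqP; split; last first.
  apply: smallest_sub; first exact: sigma_algebra_measurable.
  by move=> _ [s _ <-]; exact: measurable_rat_cylinder.
apply: smallest_sub; first exact: smallest_sigma_algebra.
move=> _ [n [A [mA ->]]].
pose T := g_sigma_algebraType (range rat_cylinder).
suff mcoord : measurable_fun [set: T] (fun f : T => f n : R).
  by have := mcoord measurableT _ mA; rewrite setTI.
apply: (measurability _ (RGenInftyO.measurableE R)) => _ [_ [x ->] <-].
rewrite setTI.
have -> : (fun f : T => f n) @^-1` `]-oo, x[ =
    \bigcup_(q : rat) (if ratr q < x then rat_cylinder [:: (n, q)] else set0).
  apply/seteqP; split => f /=.
    rewrite in_itv /= => fx; have [q] := rat_in_itvoo fx.
    by rewrite in_itv /= => /andP[fq qx]; exists q; rewrite // qx /rat_cylinder /= fq.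
  move=> [q _]; case: ifPn => // qx; rewrite /rat_cylinder /= andbT => fq.
  by rewrite in_itv /= (lt_trans fq qx).
apply: bigcupT_measurable_rat => q; case: ifPn => _ //.
by apply: sub_sigma_algebra; exists [:: (n, q)].
Qed.

Definition rat_cylinder_enum (n : nat) : set (seqspace R) :=
  rat_cylinder (odflt [::] (unpickle n)).

Let range_rat_cylinder_enum : range rat_cylinder_enum = range rat_cylinder.
Proof.
apply/seteqP; split => _ [s _ <-]; first by eexists.
by exists (pickle s) => //; rewrite /rat_cylinder_enum pickleK.
Qed.

Lemma seqspace_measurable_enumE :
  @measurable _ (seqspace R) = <<s range rat_cylinder_enum >>.
Proof. by rewrite range_rat_cylinder_enum; exact: seqspace_measurableE. Qed.

Lemma setI_closed_rat_cylinder_enum : setI_closed (range rat_cylinder_enum).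
Proof. by rewrite range_rat_cylinder_enum; exact: setI_closed_rat_cylinder. Qed.

Lemma bigcup_rat_cylinder_enum : \bigcup_n rat_cylinder_enum n = setT.
Proof.
by apply/seteqP; split => // f _; exists (pickle ([::] : seq (nat * rat))).
Qed.

Lemma measurable_fun_seqspace d (T : measurableType d) (f : T -> seqspace R) :
  (forall n, measurable_fun setT (fun t => f t n)) -> measurable_fun setT f.
Proof.
move=> mf; apply: (@measurability _ _ _ (seqspace R) _ _ (@cylinders R) erefl).
move=> _ [_ [n [A [mA ->]]] <-].
by rewrite setTI -[X in measurable X]setTI; exact: mf.
Qed.

End rational_cylinders.

Section measure_lemmas.
Local Open Scope ereal_scope.
Context d (T : measurableType d) (R : realType).

Lemma ae_null_dominates (m1 m2 : {measure set T -> \bar R}) (P : T -> Prop) :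
  m1 `<< m2 -> {ae m2, forall x, P x} -> {ae m1, forall x, P x}.
Proof.
move=> m12 [N [mN N0 sN]]; exists N; split => //.
exact: (null_content_dominatesP _ _).1 m12 N mN N0.
Qed.

Variables (m : {finite_measure set T -> \bar R}) (H : set T) (mH : measurable H).

Lemma ae_mrestr (P : T -> Prop) :
  {ae mrestr m mH, forall x, P x} -> {ae m, forall x, H x -> P x}.
Proof.
move=> [N [mN N0 sN]]; exists (N `&` H); split => //; first exact: measurableI.
by move=> x /not_implyP[Hx nPx]; split => //; exact: sN.
Qed.

Lemma ge0_integral_mrestr A (f : T -> \bar R) : measurable A ->
    (forall x, 0 <= f x) -> measurable_fun setT f ->
  \int[mrestr m mH]_(x in A) f x = \int[m]_(x in A `&` H) f x.
Proof.
move=> mA f0 mf.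
have restr_dom : mrestr m mH `<< m.
  apply/null_content_dominatesP => B mB mB0; apply/eqP.
  rewrite eq_le measure_ge0 andbT -mB0 /mrestr.
  by rewrite le_measure ?inE//; exact: measurableI.
pose rn := Radon_Nikodym_SigmaFinite.f (mrestr m mH) m.
have rn_indic : ae_eq m setT rn (fun x => (\1_H x)%:E).
  apply: integral_ae_eq => //.
  - exact: Radon_Nikodym_SigmaFinite.f_integrable.
  - by apply/measurable_EFinP; exact: measurable_indic.
  move=> E _ mE; rewrite -Radon_Nikodym_SigmaFinite.f_integral //.
  by rewrite integral_indic // setIC.
rewrite -(Radon_Nikodym_SigmaFinite.change_of_variables restr_dom) //; last first.
  exact: measurable_funS mf.
rewrite integral_mkcondr; apply: ae_eq_integral => //.
- apply: emeasurable_funM; first exact: measurable_funS mf.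
  apply/measurable_funTS/measurable_int.
  exact: Radon_Nikodym_SigmaFinite.f_integrable.
- apply/measurable_funTS/(measurable_restrictT f mH).
  exact: measurable_funS mf.
apply: filterS rn_indic => x rnx _; rewrite -/rn rnx // /patch indicE.
by case: (x \in H); rewrite ?mule1 ?mule0.
Qed.

End measure_lemmas.

Section product_measure_dominates.
Local Open Scope ereal_scope.
Context d1 d2 (T1 : measurableType d1) (T2 : measurableType d2) (R : realType).
Variables (m1 m1' : {measure set T1 -> \bar R}).
Variable m2 : {sigma_finite_measure set T2 -> \bar R}.

Lemma null_dominates_product_measure1l : m1 `<< m1' -> m1 \x m2 `<< m1' \x m2.
Proof.
move=> m11'; apply/null_content_dominatesP => C mC.
have sec_ge0 x : 0 <= (m2 \o xsection C) x by exact: measure_ge0.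
have msec : measurable_fun setT (m2 \o xsection C) by exact: measurable_fun_xsection.
rewrite /product_measure1 /= => C0.
have sec0 : ae_eq m1' setT (m2 \o xsection C) (cst 0).
  apply/(ae_eq_integral_abs _ measurableT msec).
  by under eq_integral => x _ do rewrite gee0_abs //.
have {}sec0 := ae_null_dominates m11' sec0.
by rewrite (ae_eq_integral (cst 0)) ?integral0.
Qed.

End product_measure_dominates.

Section geometric_mixture.
Context d (T : measurableType d) (R : realType) (m : nat -> probability T R).

Definition geometric_weight (n : nat) : {nonneg R} := ((2 ^ n.+1)%:R^-1)%:nng.

Local Open Scope ereal_scope.

Definition geometric_mixture :=
  mseries (fun n => mscale (geometric_weight n) (m n)) 0.

HB.instance Definition _ := Measure.on geometric_mixture.

Let geometric_mixture_setT : geometric_mixture setT = 1.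
Proof.
rewrite /geometric_mixture /mseries.
transitivity (\sum_(0 <= n <oo) (1 / (2 ^ (n + 1))%:R : R)%:E).
  apply: eq_eseriesr => n _; rewrite /mscale /= div1r addn1 -[RHS]mule1.
  by congr (_ * _); exact: probability_setT.
by apply: cvg_lim => //; have := @cvg_geometric_eseries_half R 1 0; rewrite divr1.
Qed.

HB.instance Definition _ :=
  Measure_isProbability.Build _ _ _ geometric_mixture geometric_mixture_setT.

Lemma null_dominates_geometric_mixture n : m n `<< geometric_mixture.
Proof.
apply/null_content_dominatesP => C mC C0.
have wC0 : (geometric_weight n)%:num%:E * m n C = 0.
  apply/eqP; rewrite eq_le mule_ge0 // andbT -C0.
  apply: le_trans (nneseries_lim_ge n.+1 _); last by move=> i _ _; rewrite mule_ge0.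
  rewrite big_nat_recr //= leeDr //.
  by rewrite sume_ge0 // => i _; rewrite mule_ge0.
by move/eqP: wC0; rewrite mule_eq0 eqe invr_eq0 pnatr_eq0 expn_eq0 /= => /eqP.
Qed.

End geometric_mixture.

Section density_measure.
Local Open Scope ereal_scope.
Context d (T : measurableType d) (R : realType).
Variables (m : {measure set T -> \bar R}) (f : T -> \bar R).

Definition density_measure (f0 : forall x, 0 <= f x) (mf : measurable_fun setT f) :=
  fun A => \int[m]_(x in A) f x.

Hypotheses (f0 : forall x, 0 <= f x) (mf : measurable_fun setT f).

Let density_measure0 : density_measure f0 mf set0 = 0.
Proof. exact: integral_set0. Qed.

Let density_measure_ge0 A : 0 <= density_measure f0 mf A.
Proof. exact: integral_ge0. Qed.

Let density_measure_sigma_additive : semi_sigma_additive (density_measure f0 mf).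
Proof.
move=> F mF tF mUF; rewrite /density_measure ge0_integral_bigcup //; last first.
  exact: measurable_funTS.
by apply: is_cvg_nneseries => n _ _; exact: integral_ge0.
Qed.

HB.instance Definition _ := isMeasure.Build _ _ _ (density_measure f0 mf)
  density_measure0 density_measure_ge0 density_measure_sigma_additive.

Lemma null_dominates_density_measure : density_measure f0 mf `<< m.
Proof.
apply/null_content_dominatesP => N mN N0.
by apply: null_set_integral => //; exact: measurable_funTS.
Qed.

End density_measure.

Section disintegration.
Local Open Scope ereal_scope.
Context d1 d2 (T1 : measurableType d1) (T2 : measurableType d2) (R : realType).
Variables (nu : subprobability T1 R) (lam : subprobability T2 R).
Variables (mu : {finite_measure set (T1 * T2)%type -> \bar R})
  (mu1 : {finite_measure set T1 -> \bar R}) (k : R.-pker T1 ~> T2).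
Hypothesis mu_dom : mu `<< nu \x lam.
Hypothesis mu_disint : forall A B, measurable A -> measurable B ->
  mu (A `*` B) = \int[mu1]_(x in A) k x B.
Variable G : nat -> set T2.
Hypotheses (measurableG : @measurable _ T2 = <<s range G >>)
  (setI_closedG : setI_closed (range G)) (coverG : \bigcup_n G n = setT).

Let measurable_G n : measurable (G n).
Proof. by rewrite measurableG; exact: sub_sigma_algebra. Qed.

Let mu_marginal A : measurable A -> mu (A `*` setT) = mu1 A.
Proof.
move=> mA; rewrite mu_disint // -[RHS]mul1e -integral_cst //.
by apply: eq_integral => x _; rewrite prob_kernel.
Qed.

Let mu1_dom : mu1 `<< nu.
Proof.
apply/null_content_dominatesP => A mA A0.
rewrite -mu_marginal //; apply: (null_content_dominatesP _ _).1 mu_dom _ _ _.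
  exact: measurableX.
apply: eq_trans (product_measure1E _ _ mA measurableT) _.
by rewrite A0 mul0e.
Qed.

(* [product_subprobability (nu, lam)] is [nu \x lam] equipped with the
   sigma-finite structure that the Radon-Nikodym theorem requires. *)
Let h := Radon_Nikodym_SigmaFinite.f mu (product_subprobability (nu, lam)).
Let g := Radon_Nikodym_SigmaFinite.f mu1 nu.

Let h_ge0 z : 0 <= h z.
Proof. exact: Radon_Nikodym_SigmaFinite.f_ge0. Qed.

Let measurable_h : measurable_fun setT h.
Proof. exact/measurable_int/Radon_Nikodym_SigmaFinite.f_integrable. Qed.

Let h_integral C : measurable C -> mu C = \int[nu \x lam]_(z in C) h z.
Proof. exact: Radon_Nikodym_SigmaFinite.f_integral. Qed.

Let g_ge0 x : 0 <= g x.
Proof. exact: Radon_Nikodym_SigmaFinite.f_ge0. Qed.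

Let measurable_g : measurable_fun setT g.
Proof. exact/measurable_int/Radon_Nikodym_SigmaFinite.f_integrable. Qed.

Let fibre_integral B x := \int[lam]_(y in B) h (x, y).

Let measurable_fibre_integral B : measurable B ->
  measurable_fun setT (fibre_integral B).
Proof.
move=> mB; have mhB : measurable_fun setT (h \_ (setT `*` B)).
  apply/(measurable_restrictT _ (measurableX measurableT mB)).
  exact: measurable_funS measurable_h.
rewrite (_ : fibre_integral B = fubini_F lam (h \_ (setT `*` B))).
  apply: measurable_fun_fubini_tonelli_F => // z.
  by rewrite /patch; case: ifP.
apply/funext => x; rewrite /fibre_integral /fubini_F [LHS]integral_mkcond.
by congr (integral _ _ _); apply/funext => y; rewrite /patch in_setX in_setT.
Qed.

Let integral_fibre_integral A B : measurable A -> measurable B ->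
  \int[nu]_(x in A) fibre_integral B x = mu (A `*` B).
Proof.
move=> mA mB; have mAB := measurableX mA mB.
rewrite h_integral // [RHS]integral_mkcond fubini_tonelli1 //; last 2 first.
- apply/(measurable_restrictT _ mAB).
  exact: measurable_funS measurable_h.
- by move=> z; rewrite /patch; case: ifP.
rewrite integral_mkcond; congr (integral _ _ _); apply/funext => x.
rewrite /fubini_F /patch /=; case: (boolP (x \in A)) => xA.
  rewrite /fibre_integral integral_mkcond; congr (integral _ _ _).
  by apply/funext => y; rewrite /patch in_setX xA.
by apply/esym/integral0_eq => y _; rewrite in_setX (negbTE xA).
Qed.

Let ae_kernel_density B : measurable B ->
  ae_eq nu setT (fun x => k x B * g x) (fibre_integral B).
Proof.
move=> mB; have kB_ge0 x : 0 <= k x B by exact: measure_ge0.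
have mkB : measurable_fun setT (fun x => k x B) by exact: measurable_kernel.
apply: integral_ae_eq => //; last 2 first.
- exact: measurable_fibre_integral.
- move=> A _ mA; rewrite integral_fibre_integral // mu_disint //.
  rewrite (Radon_Nikodym_SigmaFinite.change_of_variables mu1_dom) //.
  exact: measurable_funS mkB.
apply: (Radon_Nikodym_SigmaFinite.integrableM mu1_dom kB_ge0 measurableT).
apply: (@le_integrable _ _ _ mu1 setT _ _ (EFin \o cst 1%R)) => //.
  move=> x _ /=; rewrite gee0_abs // normr1 -(@prob_kernel _ _ _ _ _ k x).
  by rewrite le_measure ?inE.
exact: finite_measure_integrable_cst.
Qed.

Let kernel_dominates_at x :
  (forall n, k x (G n) * g x = fibre_integral (G n) x) -> g x != 0 ->
  k x `<< lam.
Proof.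
move=> kG gx0.
have gx_fin : g x \is a fin_num by exact: Radon_Nikodym_SigmaFinite.f_fin_num.
set c := fine (g x); have gxE : g x = c%:E by rewrite fineK.
have c_gt0 : (0 < c)%R by rewrite -lte_fin -gxE lt0e gx0 g_ge0.
pose f y := h (x, y) * c^-1%:E.
have f_ge0 y : 0 <= f y by rewrite mule_ge0 // lee_fin invr_ge0 ltW.
have mf : measurable_fun setT f.
  by apply: emeasurable_funM => //; exact: measurable_fun_pair2 measurable_h.
have k_density : forall B, measurable B -> k x B = density_measure lam f_ge0 mf B.
  apply: (measure_unique _ _ measurableG setI_closedG _ coverG) => //.
  - move=> _ [n _ <-]; rewrite /= /density_measure /f ge0_integralZr //.
    + rewrite -/(fibre_integral (G n) x) -kG gxE -muleA -EFinM.
      by rewrite divff ?gt_eqF // mule1.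
    + exact/measurable_funTS/measurable_fun_pair2.
    + by rewrite lee_fin invr_ge0 ltW.
  - move=> n; apply: (le_lt_trans _ (ltry 1)).
    by rewrite -(@prob_kernel _ _ _ _ _ k x) le_measure ?inE.
apply/null_content_dominatesP => N mN N0; rewrite k_density //.
exact: (null_content_dominatesP _ _).1 (null_dominates_density_measure _ _) N mN N0.
Qed.

Lemma ae_kernel_null_dominates : {ae mu1, forall x, k x `<< lam}.
Proof.
have ae_density : {ae nu, forall x n, k x (G n) * g x = fibre_integral (G n) x}.
  apply: ae_foralln => n; apply: filterS (ae_kernel_density (measurable_G n)).
  by move=> x; apply.
have ae_g_neq0 : {ae mu1, forall x, g x != 0}.
  have mg0 : measurable (g @^-1` [set 0]).
    by rewrite -[X in measurable X]setTI; exact: measurable_g.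
  exists (g @^-1` [set 0]); split => //; last by move=> x /negP/negPn/eqP.
  rewrite (Radon_Nikodym_SigmaFinite.f_integral mu1_dom) //.
  by apply: integral0_eq => x; apply.
apply: filterS2 (ae_null_dominates mu1_dom ae_density) ae_g_neq0 => x.
exact: kernel_dominates_at.
Qed.

End disintegration.

Lemma mem_range_even (R : realType) (x c : R) (y : nat -> R) :
  (forall j, c <= y (2 * j).+1) -> x < c -> range y x -> exists j, y (2 * j)%N = x.
Proof.
move=> yc xc [m _ ymx]; exists m./2; rewrite -ymx in xc *.
have := yc m./2; have := odd_double_half m; rewrite -muln2 mulnC.
case: (odd m) => /= [|]; rewrite ?add0n ?add1n => ->//.
by move=> /(lt_le_trans xc); rewrite ltxx.
Qed.

Section interlaced_sequences.
Variables (R : realType) (d : measure_display) (Omega : measurableType d)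
  (P : probability Omega R) (X Y : nat -> {RV P >-> R}).

Definition Ylower : Omega -> seqspace R := fun w j => Y (2 * j)%N w.
Definition Yupper : Omega -> seqspace R := fun w j => Y (2 * j).+1 w.

Let measurable_Yupper : measurable_fun setT Yupper.
Proof. by apply: measurable_fun_seqspace => j; exact: measurable_funPT. Qed.

HB.instance Definition _ := isMeasurableFun.Build _ _ _ _ Yupper measurable_Yupper.

Definition X0_Yupper (w : Omega) : (R * seqspace R)%type := (X 0%N w, Yupper w).
Definition Ylower_Yupper n (w : Omega) : (R * seqspace R)%type := (Y (2 * n)%N w, Yupper w).

HB.instance Definition _ := isMeasurableFun.Build _ _ _ _ X0_Yupper
  (measurable_fun_pair (measurable_funPT (X 0%N)) measurable_Yupper).
HB.instance Definition _ n := isMeasurableFun.Build _ _ _ _ (Ylower_Yupper n)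
  (measurable_fun_pair (measurable_funPT (Y (2 * n)%N)) measurable_Yupper).

Definition lower_mixture := geometric_mixture (fun n => distribution P (Y (2 * n)%N)).

Let lt_half : set R := `]-oo, 2^-1[%classic.
Let measurable_lt_half : measurable lt_half. Proof. exact: measurable_itv. Qed.
Let measurable_lt_half_T : measurable (lt_half `*` @setT (seqspace R)).
Proof. exact: measurableX. Qed.

Hypothesis Y_range :
  {ae P, forall w, range (fun n => Y n w) = range (fun n => X n w)}.
Hypothesis Yupper_ge_half : forall j, {ae P, forall w, 2^-1 <= Y (2 * j).+1 w}.
Hypothesis indep_Yupper_Ylower : indep_seq P Yupper Ylower.

Lemma distribution_Ylower_Yupper n C : measurable C ->
  distribution P (Ylower_Yupper n) C =
  (distribution P (Y (2 * n)%N) \x distribution P Yupper)%E C.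
Proof.
move=> mC; apply/esym/product_measure_unique => // A B mA mB /=.
change (P (Ylower_Yupper n @^-1` (A `*` B)) =
  P (Y (2 * n)%N @^-1` A) * P (Yupper @^-1` B))%E.
have -> : Ylower_Yupper n @^-1` (A `*` B) =
    Yupper @^-1` B `&` Ylower @^-1` ((fun f : seqspace R => f n) @^-1` A).
  by apply/seteqP; split => w [].
rewrite indep_Yupper_Ylower //; last by apply: sub_sigma_algebra; exists n, A.
exact: muleC.
Qed.

Lemma X0_Yupper_null_dominates :
  mrestr (distribution P X0_Yupper) measurable_lt_half_T `<<
  (lower_mixture \x distribution P Yupper)%E.
Proof.
apply/null_content_dominatesP => C mC C0.
have Ylower_Yupper_null n : P (Ylower_Yupper n @^-1` C) = 0%E.
  have := null_dominates_product_measure1l (m2 := distribution P Yupper)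
    (@null_dominates_geometric_mixture _ _ _ (fun n => distribution P (Y (2 * n)%N)) n).
  move/null_content_dominatesP => /(_ C mC C0).
  by rewrite -distribution_Ylower_Yupper.
have [N [mN N0 sN]] : {ae P, forall w, range (fun n => Y n w) = range (fun n => X n w)
    /\ forall j, 2^-1 <= Y (2 * j).+1 w}.
  by apply: filterS2 Y_range (ae_foralln Yupper_ge_half) => w.
change (P (X0_Yupper @^-1` (C `&` (lt_half `*` setT))) = 0%E).
have mC_lt_half := measurableI _ _ mC measurable_lt_half_T.
apply/negligibleP; first by rewrite -[X in measurable X]setTI; exact: measurable_funPT.
apply: (@negligibleS _ _ _ P (N `|` \bigcup_n Ylower_Yupper n @^-1` C)).
  move=> w [Cw [Xw _]]; have [Nw|Nw] := pselect (N w); [by left|right].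
  have [Yw Yw_ge] : range (fun n => Y n w) = range (fun n => X n w) /\
      forall j, 2^-1 <= Y (2 * j).+1 w by apply: contra_notP Nw => /sN.
  have [||n Yn] := @mem_range_even _ (X 0%N w) _ (fun n => Y n w) Yw_ge.
  - by move: Xw; rewrite /lt_half /= in_itv.
  - by rewrite Yw; exists 0%N.
  by exists n => //; rewrite /Ylower_Yupper /= Yn.
apply: negligibleU; first by exists N; split.
apply: negligible_bigcup => n; apply/negligibleP; last exact: Ylower_Yupper_null.
by rewrite -[X in measurable X]setTI; exact: measurable_funPT.
Qed.

Variable k : R.-pker R ~> seqspace R.
Hypothesis k_cond_distr : is_cond_distr (X 0%N) Yupper k.

Lemma X0_Yupper_disintegration A B : measurable A -> measurable B ->
  mrestr (distribution P X0_Yupper) measurable_lt_half_T (A `*` B) =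
  (\int[mrestr (distribution P (X 0%N)) measurable_lt_half]_(x in A) k x B)%E.
Proof.
move=> mA mB; have kB_ge0 x : (0 <= k x B)%E by exact: measure_ge0.
rewrite ge0_integral_mrestr //; last exact: measurable_kernel.
rewrite -k_cond_distr //; last exact: measurableI.
change (P (X0_Yupper @^-1` ((A `*` B) `&` (lt_half `*` setT))) =
  P (X 0%N @^-1` (A `&` lt_half) `&` Yupper @^-1` B)).
by congr (P _); apply/seteqP; split => w /=; tauto.
Qed.

Lemma ae_Yupper_kernel_null_dominates :
  {ae distribution P (X 0%N), forall x, 0 < x < 2^-1 -> k x `<< distribution P Yupper}.
Proof.
have := ae_kernel_null_dominates X0_Yupper_null_dominates X0_Yupper_disintegration
  (@seqspace_measurable_enumE R) (@setI_closed_rat_cylinder_enum R)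
  (@bigcup_rat_cylinder_enum R).
move/ae_mrestr; apply: filterS => x kx /andP[_ x_lt]; apply: kx.
by rewrite /lt_half /= in_itv.
Qed.

End interlaced_sequences.

(* Indexing is 0-based: X n is X_{n+1} and Y n is Y_{n+1}, so [Ylower] is
   (Y_1, Y_3, ...) and [Yupper] is (Y_2, Y_4, ...). *)
Theorem proposition5p2 (R : realType) (d : measure_display)
    (Omega : measurableType d) (P : probability Omega R)
    (X Y : nat -> {RV P >-> R}) :
  (forall n w, 0 < X n w < 1) ->
  {ae P, forall w, dense_in_01 (fun n => X n w)} ->
  (forall n w, 0 < Y n w < 1) ->
  {ae P, forall w, range (fun n => Y n w) = range (fun n => X n w)} ->
  (forall j, {ae P, forall w, Y (2 * j)%N w < 2^-1}) ->
  (forall j, {ae P, forall w, 2^-1 <= Y (2 * j).+1 w}) ->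
  indep_seq P (fun w => (fun j => Y (2 * j).+1 w) : seqspace R)
              (fun w => (fun j => Y (2 * j)%N w) : seqspace R) ->
  (0 < P [set w | (X 0%N w < 2^-1)%R])%E ->
  forall k : R.-pker R ~> seqspace R,
    is_cond_distr (X 0%N) (fun w => (fun j => Y (2 * j).+1 w) : seqspace R) k ->
    {ae distribution P (X 0%N), forall x, 0 < x < 2^-1 ->
       k x `<< pushforward P (fun w => (fun j => Y (2 * j).+1 w) : seqspace R)}.
Proof.
move=> _ _ _ Y_range _ Yupper_ge_half indep_Yupper_Ylower _ k k_cond_distr.
exact (ae_Yupper_kernel_null_dominates Y_range Yupper_ge_half
  indep_Yupper_Ylower k_cond_distr).
Qed.
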